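(* Let $S$ be an idempotent semiring satisfying the identity $x+xyx+x\approx x$. Then the relation $\sigma$ on $S$ defined by $a\,\sigma\, b$ if and only if $aba=aba+a+aba$ and $bab=bab+b+bab$ is itself the least distributive lattice congruence on $S$.
   Context: An idempotent semiring is an algebra $(S,+,\cdot)$ with two binary operations such that $(S,+)$ and $(S,\cdot)$ are bands (associative, with $x+x=x$ and $xx=x$), and both distributive laws $x(y+z)=xy+xz$ and $(x+y)z=xz+yz$ hold; addition is not assumed commutative. A distributive lattice congruence on $S$ is a congruence $\rho$ such that $S/\rho$ is a distributive lattice, i.e. $S/\rho$ satisfies $x+y\approx y+x$, $xy\approx yx$ and $x+xy\approx x$. *)

Definition idempotent_semiring {S : Type} (add mul : S -> S -> S) : Prop :=
  (forall x y z, add x (add y z) = add (add x y) z) /\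
  (forall x, add x x = x) /\
  (forall x y z, mul x (mul y z) = mul (mul x y) z) /\
  (forall x, mul x x = x) /\
  (forall x y z, mul x (add y z) = add (mul x y) (mul x z)) /\
  (forall x y z, mul (add x y) z = add (mul x z) (mul y z)).

Definition equivalence_rel {S : Type} (rho : S -> S -> Prop) : Prop :=
  (forall x, rho x x) /\
  (forall x y, rho x y -> rho y x) /\
  (forall x y z, rho x y -> rho y z -> rho x z).

Definition congruence {S : Type} (add mul : S -> S -> S) (rho : S -> S -> Prop) : Prop :=
  equivalence_rel rho /\
  (forall a b c d, rho a b -> rho c d -> rho (add a c) (add b d)) /\
  (forall a b c d, rho a b -> rho c d -> rho (mul a c) (mul b d)).

(* S/rho satisfies x+y = y+x, xy = yx, x + xy = x (with the identities of an
   idempotent semiring inherited, this is exactly "S/rho is a distributive lattice") *)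
Definition dl_congruence {S : Type} (add mul : S -> S -> S) (rho : S -> S -> Prop) : Prop :=
  congruence add mul rho /\
  (forall x y, rho (add x y) (add y x)) /\
  (forall x y, rho (mul x y) (mul y x)) /\
  (forall x y, rho (add x (mul x y)) x).

Definition least_dl_congruence {S : Type} (add mul : S -> S -> S) (rho : S -> S -> Prop) : Prop :=
  dl_congruence add mul rho /\
  (forall tau, dl_congruence add mul tau -> forall a b, rho a b -> tau a b).

Definition sigma_rel {S : Type} (add mul : S -> S -> S) (a b : S) : Prop :=
  mul (mul a b) a = add (add (mul (mul a b) a) a) (mul (mul a b) a) /\
  mul (mul b a) b = add (add (mul (mul b a) b) b) (mul (mul b a) b).

From Stdlib Require Import Setoid Morphisms.

(* In a band, Green's relation D (x ~ y iff xyx = x and yxy = y) is the least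
   congruence with commutative quotient.  Applied to the additive band of S it
   gives the least semilattice congruence E of (S, +), and S/E is an idempotent
   semiring with commutative addition in which x + xyx = x.  Applied again, to
   the multiplicative band of S/E, it gives exactly sigma; the absorption law
   x + xyx = x is what makes this second D compatible with addition and forces
   x + xy ~ x, so that the quotient is a distributive lattice. *)

Section Band.
Context {T : Type} (R : T -> T -> Prop) `{Equivalence T R} (op : T -> T -> T)
  `{Proper _ (R ==> R ==> R) op}.
Hypothesis op_assoc : forall x y z, R (op x (op y z)) (op (op x y) z).
Hypothesis op_idem : forall x, R (op x x) x.

Local Infix "⋅" := op (at level 40, left associativity).

Ltac reassoc := repeat rewrite <- op_assoc; reflexivity.

(* The J-preorder of a band: x lies in the ideal S y S. *)
Definition below x y := R (x ⋅ y ⋅ x) x.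

Definition greenD x y := below x y /\ below y x.

Lemma below_factor a z b : below (a ⋅ z ⋅ b) z.
Proof.
  unfold below.
  transitivity (a ⋅ z ⋅ b ⋅ z ⋅ a ⋅ ((z ⋅ b) ⋅ (z ⋅ b))).
  { rewrite (op_idem (z ⋅ b)). reassoc. }
  transitivity ((a ⋅ z ⋅ b ⋅ z) ⋅ (a ⋅ z ⋅ b ⋅ z) ⋅ b). { reassoc. }
  rewrite (op_idem (a ⋅ z ⋅ b ⋅ z)).
  transitivity (a ⋅ ((z ⋅ b) ⋅ (z ⋅ b))). { reassoc. }
  rewrite (op_idem (z ⋅ b)). reassoc.
Qed.

Lemma below_of_factor x a z b : R x (a ⋅ z ⋅ b) -> below x z.
Proof. intros Hx. unfold below. rewrite Hx. apply below_factor. Qed.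

Lemma below_trans x y z : below x y -> below y z -> below x z.
Proof.
  unfold below at 1 2; intros Hxy Hyz. apply (below_of_factor x (x ⋅ y) z (y ⋅ x)).
  rewrite <- Hxy at 1. rewrite <- Hyz at 1. reassoc.
Qed.

Lemma below_mulr x y w : below x y -> below (x ⋅ w) (y ⋅ w).
Proof.
  unfold below at 1; intros Hxy. apply (below_of_factor _ (x ⋅ y ⋅ x ⋅ w) _ (y ⋅ x ⋅ w)).
  transitivity (x ⋅ y ⋅ x ⋅ w). { rewrite Hxy. reflexivity. }
  transitivity (x ⋅ ((y ⋅ x ⋅ w) ⋅ (y ⋅ x ⋅ w))).
  { rewrite (op_idem (y ⋅ x ⋅ w)). reassoc. }
  transitivity (x ⋅ y ⋅ x ⋅ ((w ⋅ y) ⋅ (w ⋅ y)) ⋅ x ⋅ w).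
  { rewrite (op_idem (w ⋅ y)). reassoc. }
  reassoc.
Qed.

Lemma below_mull x y w : below x y -> below (w ⋅ x) (w ⋅ y).
Proof.
  unfold below at 1; intros Hxy. apply (below_of_factor _ (w ⋅ x ⋅ y ⋅ x) _ (x ⋅ w ⋅ x)).
  transitivity ((w ⋅ x) ⋅ (w ⋅ x)). { rewrite (op_idem (w ⋅ x)). reflexivity. }
  transitivity (w ⋅ (x ⋅ y ⋅ x) ⋅ (w ⋅ x)). { rewrite Hxy. reassoc. }
  transitivity (w ⋅ x ⋅ ((y ⋅ x ⋅ w) ⋅ (y ⋅ x ⋅ w)) ⋅ x).
  { rewrite (op_idem (y ⋅ x ⋅ w)). reassoc. }
  reassoc.
Qed.

Lemma below_comm x y : below (x ⋅ y) (y ⋅ x).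
Proof.
  apply (below_of_factor _ x _ y).
  transitivity ((x ⋅ y) ⋅ (x ⋅ y)). { rewrite (op_idem (x ⋅ y)). reflexivity. }
  reassoc.
Qed.

Lemma greenD_equivalence : Equivalence greenD.
Proof.
  split.
  - intros x. split; unfold below; rewrite !op_idem; reflexivity.
  - intros x y [Hxy Hyx]. split; assumption.
  - intros x y z [Hxy Hyx] [Hyz Hzy].
    split; [apply (below_trans x y z) | apply (below_trans z y x)]; assumption.
Qed.

Lemma greenD_op : Proper (greenD ==> greenD ==> greenD) op.
Proof.
  intros x y [Hxy Hyx] u v [Huv Hvu].
  split; [apply (below_trans _ (y ⋅ u)) | apply (below_trans _ (x ⋅ v))];
    auto using below_mulr, below_mull.
Qed.

Lemma greenD_of_R x y : R x y -> greenD x y.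
Proof. intros Hxy. split; unfold below; rewrite Hxy, !op_idem; reflexivity. Qed.

Lemma greenD_comm x y : greenD (x ⋅ y) (y ⋅ x).
Proof. split; apply below_comm. Qed.

Section Least.
Context (tau : T -> T -> Prop) `{Equivalence T tau}.
Hypothesis R_tau : forall x y, R x y -> tau x y.
Hypothesis tau_comm : forall x y, tau (x ⋅ y) (y ⋅ x).

Lemma below_tau x y : below x y -> tau x (x ⋅ y).
Proof.
  intros Hxy. transitivity (x ⋅ y ⋅ x). { apply R_tau. symmetry. exact Hxy. }
  rewrite (tau_comm (x ⋅ y) x). apply R_tau. rewrite op_assoc, op_idem. reflexivity.
Qed.

Lemma greenD_least x y : greenD x y -> tau x y.
Proof.
  intros [Hxy Hyx]. transitivity (x ⋅ y); [apply below_tau; exact Hxy |].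
  transitivity (y ⋅ x); [apply tau_comm | symmetry; apply below_tau; exact Hyx].
Qed.

End Least.
End Band.

Section SemiringModulo.
Context {T : Type} (R : T -> T -> Prop) `{Equivalence T R} (add mul : T -> T -> T)
  `{Proper _ (R ==> R ==> R) add} `{Proper _ (R ==> R ==> R) mul}.
Hypothesis add_assoc : forall x y z, R (add x (add y z)) (add (add x y) z).
Hypothesis add_comm : forall x y, R (add x y) (add y x).
Hypothesis add_idem : forall x, R (add x x) x.
Hypothesis mul_assoc : forall x y z, R (mul x (mul y z)) (mul (mul x y) z).
Hypothesis mul_idem : forall x, R (mul x x) x.
Hypothesis mul_addr : forall x y z, R (mul x (add y z)) (add (mul x y) (mul x z)).
Hypothesis mul_addl : forall x y z, R (mul (add x y) z) (add (mul x z) (mul y z)).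
Hypothesis add_absorb : forall x y, R (add x (mul (mul x y) x)) x.

Local Infix "+" := add.
Local Infix "⋅" := mul (at level 40, left associativity).
Local Notation D := (greenD R mul).

Definition add_le u v := R (u + v) v.

Lemma add_le_trans u v w : add_le u v -> add_le v w -> add_le u w.
Proof. unfold add_le; intros Huv Hvw. rewrite <- Hvw, add_assoc, Huv. reflexivity. Qed.

Lemma add_le_of_R u v : R u v -> add_le u v.
Proof. unfold add_le; intros Huv. rewrite Huv. apply add_idem. Qed.

Lemma add_le_addl u v : add_le u (u + v).
Proof. unfold add_le. rewrite add_assoc, add_idem. reflexivity. Qed.

Lemma add_le_addr u v : add_le v (u + v).
Proof. unfold add_le. rewrite add_comm, <- add_assoc, add_idem. reflexivity. Qed.

Lemma add_le_lub u v w : add_le u w -> add_le v w -> add_le (u + v) w.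
Proof. unfold add_le; intros Huw Hvw. rewrite <- add_assoc, Hvw, Huw. reflexivity. Qed.

Lemma add_le_antisym u v : add_le u v -> add_le v u -> R u v.
Proof. unfold add_le; intros Huv Hvu. rewrite <- Huv, <- Hvu at 1. apply add_comm. Qed.

Lemma add_le_mul u u' v v' : add_le u u' -> add_le v v' -> add_le (u ⋅ v) (u' ⋅ v').
Proof.
  unfold add_le; intros Hu Hv. apply add_le_trans with (u' ⋅ v); unfold add_le.
  - rewrite <- mul_addl, Hu. reflexivity.
  - rewrite <- mul_addr, Hv. reflexivity.
Qed.

(* The upper bound comes from absorption, the lower one from monotonicity:
   a = aba and c = ccc both lie below (a + c)(b + c)(a + c). *)
Lemma below_addr a b c : below R mul a b -> below R mul (a + c) (b + c).
Proof.
  intros Hab. apply add_le_antisym.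
  - unfold add_le. rewrite add_comm. apply add_absorb.
  - apply add_le_lub.
    + apply add_le_trans with (a ⋅ b ⋅ a). { apply add_le_of_R. symmetry. exact Hab. }
      apply add_le_mul; [apply add_le_mul|]; apply add_le_addl.
    + apply add_le_trans with (c ⋅ c ⋅ c). { apply add_le_of_R. rewrite !mul_idem. reflexivity. }
      apply add_le_mul; [apply add_le_mul|]; apply add_le_addr.
Qed.

Lemma greenD_add : Proper (D ==> D ==> D) add.
Proof.
  pose proof (greenD_equivalence R mul mul_assoc mul_idem).
  intros a b [Hab Hba] c d [Hcd Hdc].
  transitivity (b + c). { split; apply below_addr; assumption. }
  transitivity (c + b). { apply greenD_of_R; auto. }
  transitivity (d + b). { split; apply below_addr; assumption. }
  apply greenD_of_R; auto.
Qed.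

Lemma greenD_absorb x y : D (x + x ⋅ y) x.
Proof.
  assert (Hr : R ((x + x ⋅ y) ⋅ x) x) by (rewrite mul_addl, mul_idem; apply add_absorb).
  assert (Hl : R (x ⋅ (x + x ⋅ y)) (x + x ⋅ y))
    by (rewrite mul_addr, mul_assoc, !mul_idem; reflexivity).
  split; unfold below.
  - rewrite Hr, Hl. reflexivity.
  - rewrite Hl, Hr. reflexivity.
Qed.

End SemiringModulo.

Section Sigma.
Variables (S : Type) (add mul : S -> S -> S).
Hypothesis HS : idempotent_semiring add mul.
Hypothesis add_absorb : forall x y, add (add x (mul (mul x y) x)) x = x.

Let add_assoc : forall x y z, add x (add y z) = add (add x y) z := proj1 HS.
Let add_idem : forall x, add x x = x := proj1 (proj2 HS).
Let mul_assoc : forall x y z, mul x (mul y z) = mul (mul x y) z := proj1 (proj2 (proj2 HS)).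
Let mul_idem : forall x, mul x x = x := proj1 (proj2 (proj2 (proj2 HS))).
Let mul_addr : forall x y z, mul x (add y z) = add (mul x y) (mul x z) :=
  proj1 (proj2 (proj2 (proj2 (proj2 HS)))).
Let mul_addl : forall x y z, mul (add x y) z = add (mul x z) (mul y z) :=
  proj2 (proj2 (proj2 (proj2 (proj2 HS)))).

Local Notation E := (greenD eq add).

Local Instance E_equivalence : Equivalence E := greenD_equivalence eq add add_assoc add_idem.

Local Instance E_add : Proper (E ==> E ==> E) add := greenD_op eq add add_assoc add_idem.

Local Instance E_mul : Proper (E ==> E ==> E) mul.
Proof.
  intros u v [Huv Hvu] w z [Hwz Hzw]. unfold below in *.
  transitivity (mul v w); split; unfold below;
    rewrite <- ?mul_addl, <- ?mul_addr; congruence.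
Qed.

Lemma E_of_eq x y : x = y -> E x y.
Proof. intros ->. reflexivity. Qed.

Let E_mul_assoc x y z : E (mul x (mul y z)) (mul (mul x y) z) := E_of_eq _ _ (mul_assoc x y z).
Let E_mul_idem x : E (mul x x) x := E_of_eq _ _ (mul_idem x).

Lemma E_add_comm x y : E (add x y) (add y x).
Proof. exact (greenD_comm eq add add_assoc add_idem x y). Qed.

Lemma E_absorb x y : E (add x (mul (mul x y) x)) x.
Proof.
  split; unfold below.
  - rewrite add_absorb, add_assoc, add_idem. reflexivity.
  - rewrite add_assoc, add_idem, add_absorb. reflexivity.
Qed.

Lemma sigma_rel_iff a b : sigma_rel add mul a b <-> greenD E mul a b.
Proof.
  unfold sigma_rel, greenD, below.
  split.
  - intros [Ha Hb]. split; split; auto.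
  - intros [[Ha _] [Hb _]]. split; auto.
Qed.

Local Notation sigma := (greenD E mul).

Local Instance sigma_equivalence : Equivalence sigma.
Proof. exact (greenD_equivalence E mul E_mul_assoc E_mul_idem). Qed.

Local Instance sigma_add : Proper (sigma ==> sigma ==> sigma) add.
Proof.
  refine (greenD_add E add mul _ _ _ _ _ _ _ _);
    intros; auto using E_of_eq, E_add_comm, E_absorb.
Qed.

Local Instance sigma_mul : Proper (sigma ==> sigma ==> sigma) mul.
Proof. exact (greenD_op E mul E_mul_assoc E_mul_idem). Qed.

Lemma sigma_dl_congruence : dl_congruence add mul sigma.
Proof.
  split; [split; [split; [| split] | split] | split; [| split]].
  - reflexivity.
  - intros x y. apply symmetry.
  - intros x y z. apply transitivity.
  - intros a b c d Hab Hcd. rewrite Hab, Hcd. reflexivity.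
  - intros a b c d Hab Hcd. rewrite Hab, Hcd. reflexivity.
  - intros x y. exact (greenD_of_R E mul E_mul_idem _ _ (E_add_comm x y)).
  - exact (greenD_comm E mul E_mul_assoc E_mul_idem).
  - refine (greenD_absorb E add mul E_mul_assoc E_mul_idem _ _ E_absorb);
      intros; apply E_of_eq; auto.
Qed.

Lemma sigma_sub_dl_congruence tau : dl_congruence add mul tau -> forall a b, sigma a b -> tau a b.
Proof.
  intros [[[tau_refl [tau_sym tau_trans]] _] [tau_add_comm [tau_mul_comm _]]].
  assert (tau_equiv : Equivalence tau) by (split; assumption).
  assert (E_tau : forall x y, E x y -> tau x y).
  { apply (greenD_least eq add add_assoc add_idem tau); auto.
    intros x y ->. reflexivity. }
  exact (greenD_least E mul E_mul_assoc E_mul_idem tau E_tau tau_mul_comm).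
Qed.

End Sigma.

Theorem theorem2p5 (S : Type) (add mul : S -> S -> S)
  (HS : idempotent_semiring add mul)
  (Hid : forall x y, add (add x (mul (mul x y) x)) x = x) :
  least_dl_congruence add mul (sigma_rel add mul).
Proof.
  assert (sigma_E : forall a b, sigma_rel add mul a b <-> greenD (greenD eq add) mul a b)
    by exact (sigma_rel_iff S add mul Hid).
  split.
  - pose proof (sigma_dl_congruence S add mul HS Hid) as Hdl.
    unfold dl_congruence, congruence, equivalence_rel in *.
    setoid_rewrite sigma_E. exact Hdl.
  - intros tau Htau a b Hab.
    apply (sigma_sub_dl_congruence S add mul HS tau Htau). apply sigma_E. exact Hab.
Qed.
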